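(* Let $x_1,\dots,x_n\in\mathbb R^d$, with $n\ge d+1$, be such that the $(d+1)\times n$ matrix with columns $\binom{1}{x_1},\dots,\binom{1}{x_n}$ has all maximal minors positive. Let $\pi\in S_n$ be such that the matrix with columns $\binom{1}{x_{\pi(1)}},\dots,\binom{1}{x_{\pi(n)}}$ also has all maximal minors positive. Then the map $x_i\mapsto x_{\pi(i)}$ is a combinatorial automorphism of the polytope $P=\operatorname{conv}(x_1,\dots,x_n)$, i.e. it induces an automorphism of the face lattice of $P$. *)

From HB Require Import structures.
From mathcomp Require Import all_boot all_order all_algebra all_fingroup.
Set Implicit Arguments. Unset Strict Implicit. Unset Printing Implicit Defensive.
Import Order.TTheory GRing.Theory Num.Theory.
Local Open Scope ring_scope.

Definition dotv (R : realFieldType) (d : nat) (u v : 'rV[R]_d) : R :=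
  \sum_(k < d) u 0 k * v 0 k.

Definition lift_mx (R : realFieldType) (d n : nat) (x : 'I_n -> 'rV[R]_d)
  : 'M[R]_(1 + d, n) :=
  col_mx (const_mx 1) (\matrix_(k < d, j < n) x j 0 k).

Definition all_max_minors_pos (R : realFieldType) (d n : nat)
  (M : 'M[R]_(1 + d, n)) : Prop :=
  forall f : 'I_(1 + d) -> 'I_n,
    (forall i j : 'I_(1 + d), (i < j)%N -> (f i < f j)%N) ->
    0 < \det (colsub f M).

(* S is the set of indices i such that x_i lies on a face of
   P = conv(x_1..x_n); faces are P ∩ {y | c.y = b} for a valid inequality
   c.y <= b of P (c = 0 allowed, giving P itself and the empty face).
   Since P = conv(x), c.y <= b holds on P iff it holds at all x_i. *)
Definition face_index_set (R : realFieldType) (d n : nat)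
  (x : 'I_n -> 'rV[R]_d) (S : {set 'I_n}) : Prop :=
  exists (c : 'rV[R]_d) (b : R),
    (forall i, dotv c (x i) <= b) /\
    (forall i, i \in S <-> dotv c (x i) = b).

(* The map x_i |-> x_{pi i} is a combinatorial automorphism of conv(x):
   it maps faces (identified with their sets of points x_i) exactly onto
   faces, hence induces an automorphism of the face lattice. *)
Definition comb_automorphism (R : realFieldType) (d n : nat)
  (x : 'I_n -> 'rV[R]_d) (pi : 'S_n) : Prop :=
  forall S : {set 'I_n},
    face_index_set x S <-> face_index_set x (pi @: S).

From HB Require Import structures.
From mathcomp Require Import all_boot all_order all_algebra all_fingroup.
From mathcomp Require Import lra zify.
Set Implicit Arguments. Unset Strict Implicit.
Import Order.TTheory GRing.Theory Num.Theory.
Local Open Scope ring_scope.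

(* The faces of conv(x) are the zero sets of the nonnegative covectors w *m M
   of the lifted matrix M = lift_mx x.  When all maximal minors of M are
   nonzero, the configuration is simplicial: every proper face lies in a face
   with exactly d points (pivot the supporting hyperplane until d points are
   tight), every subset of such a face is a face, and a d-set A is a face iff
   the minors det(x_j, x_A) have the same sign for all j outside A, because the
   covectors vanishing on A form the line spanned by these minors.  So the faces
   only depend on the signs of the maximal minors, which agree for x and for
   x \o pi when both lifted matrices have all maximal minors positive. *)

Section FiniteSets.
Variable n : nat.
Implicit Types (S T B : {set 'I_n}).

Lemma exists_notin T : (#|T| < n)%N -> exists k, k \notin T.
Proof.
move=> ltTn; have /card_gt0P[k] : (0 < #|~: T|)%N.
  by have := cardsC T; rewrite card_ord; lia.
by rewrite inE; exists k.
Qed.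

Lemma exists_superset_card T m : (#|T| <= m <= n)%N ->
  exists B, T \subset B /\ #|B| = m.
Proof.
have [k] := ubnP (m - #|T|); elim: k T => // k IHk T ltmk /andP[leTm lemn].
have [eqTm | ltTm] := eqVneq #|T| m; first by exists T.
have [j jT] : exists j, j \notin T by apply: exists_notin; lia.
have cardjT : #|j |: T| = #|T|.+1 by rewrite cardsU1 jT.
have [B [jTB cardB]] : exists B, j |: T \subset B /\ #|B| = m.
  by apply: IHk; rewrite cardjT; lia.
by exists B; split => //; apply: subset_trans jTB; apply: subsetUr.
Qed.

Lemma enum_set_ord S m : #|S| = m ->
  exists g : 'I_m -> 'I_n, injective g /\ forall j, j \in S <-> exists i, g i = j.
Proof.
move=> cardS; exists (fun i => enum_val (cast_ord (esym cardS) i)); split.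
  by move=> i1 i2 /enum_val_inj /cast_ord_inj.
move=> j; split=> [jS | [i <-]]; last exact: enum_valP.
by exists (cast_ord cardS (enum_rank_in jS j)); rewrite cast_ordK enum_rankK_in.
Qed.

End FiniteSets.

Section PositiveCombinations.
Variables (R : realFieldType) (I : finType).
Implicit Types (u h : I -> R).

Lemma ratio_test u h k : (forall j, 0 <= u j) -> 0 < h k ->
  exists t jm, [/\ 0 < h jm, u jm = t * h jm & forall j, t * h j <= u j].
Proof.
move=> u_ge0 hk_gt0.
case: (@arg_minP _ _ _ k (fun j => 0 < h j) (fun j => u j / h j) hk_gt0).
move=> jm hjm_gt0 jm_min; exists (u jm / h jm), jm; split=> //.
  by rewrite divfK // gt_eqF.
move=> j; case: (ltP 0 (h j)) => [hj_gt0 | hj_le0].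
  by rewrite -ler_pdivlMr //; apply: jm_min.
by apply: le_trans (u_ge0 j); rewrite mulr_ge0_le0 // divr_ge0 // ltW.
Qed.

Lemma dominate u h : exists K, forall j, 0 < u j -> 0 < K * u j + h j.
Proof.
exists (1 + \sum_j `|h j| / `|u j|) => j uj_gt0.
have le_hj : 1 + `|h j| / u j <= 1 + \sum_i `|h i| / `|u i|.
  rewrite lerD2l (bigD1 j) //= (gtr0_norm uj_gt0) lerDl.
  by apply: sumr_ge0 => i _; rewrite divr_ge0.
have := ler_wpM2r (ltW uj_gt0) le_hj; rewrite mulrDl mul1r divfK ?gt_eqF //.
have := lerNnormlW (lexx `|h j|).
lra.
Qed.

End PositiveCombinations.

Section Chirotope.
Variables (R : realFieldType) (d n : nat).
Implicit Types (M N : 'M[R]_(1 + d, n)).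

Definition uniform_mx M :=
  forall f : 'I_(1 + d) -> 'I_n, injective f -> \det (colsub f M) != 0.

Definition same_chirotope M N :=
  forall f : 'I_(1 + d) -> 'I_n, injective f ->
    Num.sg (\det (colsub f M)) = Num.sg (\det (colsub f N)).

Lemma det_colsub_sort (f : 'I_(1 + d) -> 'I_n) : injective f ->
  exists (g : 'I_(1 + d) -> 'I_n) (s : 'S_(1 + d)),
    (forall i j : 'I_(1 + d), (i < j)%N -> (g i < g j)%N) /\
    forall M, \det (colsub f M) = (-1) ^+ s * \det (colsub g M).
Proof.
move=> finj; pose t := sort_tuple <=%O [tuple f i | i < 1 + d].
have /tuple_permP[p tE] : perm_eq [tuple f i | i < 1 + d] t.
  by rewrite perm_sym perm_sort.
have fE i : f i = tnth t (p i).
  by rewrite -[f i](tnth_mktuple f) (tnth_nth (f i)) tE -tnth_nth tnth_mktuple.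
exists (tnth t), p^-1%g; split=> [i j ltij | M].
  have t_sorted : sorted <%O t by rewrite sort_lt_sorted map_inj_uniq ?enum_uniq.
  have := sorted_ltn_nth lt_trans (f i) t_sorted i j.
  by rewrite !inE size_tuple !ltn_ord -!tnth_nth => /(_ isT isT ltij).
have -> : colsub f M = col_perm p (colsub (tnth t) M).
  by apply/matrixP => i j; rewrite !mxE fE.
by rewrite col_permE det_mulmx det_perm mulrC.
Qed.

Lemma sg_det_colsub_max_minors_pos (f : 'I_(1 + d) -> 'I_n) : injective f ->
  exists s : bool, forall M, all_max_minors_pos M ->
    Num.sg (\det (colsub f M)) = (-1) ^+ s.
Proof.
case/det_colsub_sort=> g [s [g_incr detE]]; exists s => M posM.
by rewrite detE sgrM (gtr0_sg (posM g g_incr)) mulr1; case: (odd_perm s); rewrite ?sgrN1 ?sgr1.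
Qed.

Lemma max_minors_pos_uniform M : all_max_minors_pos M -> uniform_mx M.
Proof.
move=> posM f /sg_det_colsub_max_minors_pos[s sgE].
by rewrite -sgr_eq0 (sgE M posM) expf_neq0 // oppr_eq0 oner_eq0.
Qed.

Lemma max_minors_pos_same_chirotope M N :
  all_max_minors_pos M -> all_max_minors_pos N -> same_chirotope M N.
Proof.
by move=> posM posN f /sg_det_colsub_max_minors_pos[s sgE]; rewrite !sgE.
Qed.

Lemma same_chirotope_uniform M N :
  uniform_mx M -> same_chirotope M N -> uniform_mx N.
Proof. by move=> unifM chiMN f finj; rewrite -sgr_eq0 -chiMN // sgr_eq0 unifM. Qed.

End Chirotope.

Section Faces.
Variables (R : realFieldType) (d n : nat).
Implicit Types (M N : 'M[R]_(1 + d, n)) (u w h : 'rV[R]_(1 + d)) (S A B : {set 'I_n}).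

Definition covec M w j := (w *m M) 0 j.

Definition exposes M w S :=
  (forall j, 0 <= covec M w j) /\ (forall j, j \in S <-> covec M w j = 0).

Definition mx_face M S := exists w, exposes M w S.

Lemma covecD M u w j : covec M (u + w) j = covec M u j + covec M w j.
Proof. by rewrite /covec mulmxDl mxE. Qed.

Lemma covecB M u w j : covec M (u - w) j = covec M u j - covec M w j.
Proof. by rewrite /covec mulmxBl !mxE. Qed.

Lemma covecZ M a w j : covec M (a *: w) j = a * covec M w j.
Proof. by rewrite /covec -scalemxAl mxE. Qed.

Lemma covec0 M j : covec M 0 j = 0.
Proof. by rewrite /covec mul0mx mxE. Qed.

Lemma covec_colsub m M w (g : 'I_m -> 'I_n) i :
  (w *m colsub g M) 0 i = covec M w (g i).
Proof. by rewrite mulmx_colsub mxE. Qed.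

Lemma exposes_eq0 M w S j : exposes M w S -> j \in S -> covec M w j = 0.
Proof. by case=> _ wS /wS. Qed.

Lemma exposes_gt0 M w S j : exposes M w S -> j \notin S -> 0 < covec M w j.
Proof.
case=> w_ge0 wS jS; rewrite lt_def w_ge0 andbT.
by apply/eqP => /wS; apply/negP.
Qed.

Lemma exposesP M w S :
  (forall j, j \in S -> covec M w j = 0) ->
  (forall j, j \notin S -> 0 < covec M w j) -> exposes M w S.
Proof.
move=> wS w_gt0; split=> j; case jS: (j \in S).
- by rewrite wS.
- by rewrite ltW // w_gt0 ?jS.
- by split=> // _; apply: wS.
by split=> // wj0; have := w_gt0 j; rewrite jS wj0 ltxx => /(_ isT).
Qed.

Lemma covec_interpolate M (g : 'I_(1 + d) -> 'I_n) (r : 'rV[R]_(1 + d)) :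
  \det (colsub g M) != 0 -> exists h, forall i, covec M h (g i) = r 0 i.
Proof.
move=> detg_neq0; exists (r *m invmx (colsub g M)) => i.
by rewrite -covec_colsub mulmxKV // unitmxE unitfE.
Qed.

Lemma covec_eq0 M (g : 'I_(1 + d) -> 'I_n) w :
  \det (colsub g M) != 0 -> (forall i, covec M w (g i) = 0) -> w = 0.
Proof.
move=> detg_neq0 wg0; have g_unit : colsub g M \in unitmx by rewrite unitmxE unitfE.
rewrite -(mulmxK g_unit w); have -> : w *m colsub g M = 0.
  by apply/matrixP => z i; rewrite ord1 covec_colsub wg0 mxE.
by rewrite mul0mx.
Qed.

Lemma proper_face_card M w S j :
  uniform_mx M -> exposes M w S -> j \notin S -> (#|S| <= d)%N.
Proof.
move=> unifM expw jS; rewrite leqNgt; apply/negP => ltdS.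
have [g [ginj gS]] := enum_set_ord (erefl #|S|).
pose g' := g \o widen_ord ltdS.
have g'inj : injective g' by apply: (inj_comp ginj) => i1 i2 [] /val_inj.
have w0 : w = 0.
  apply: (covec_eq0 (unifM g' g'inj)) => i.
  by apply/(exposes_eq0 expw)/gS; exists (widen_ord ltdS i).
by have := exposes_gt0 expw jS; rewrite w0 covec0 ltxx.
Qed.

Lemma exposes_proper_superset M w S :
  uniform_mx M -> (d.+1 <= n)%N -> exposes M w S -> (#|S| < d)%N ->
  exists w' S', [/\ exposes M w' S', S \proper S' & exists j, j \notin S'].
Proof.
move=> unifM len expw ltSd.
have [k kS] := @exists_notin n S ltac:(lia).
have [k' k'kS] := @exists_notin n (k |: S) ltac:(rewrite cardsU1 kS; lia).
have [B [kkSB cardB]] := @exists_superset_card n (k' |: (k |: S)) d.+1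
  ltac:(rewrite !cardsU1 k'kS kS; lia).
have [g [ginj gB]] := enum_set_ord cardB.
have [h hg] := covec_interpolate (\row_i (g i == k)%:R) (unifM g ginj).
have hB j : j \in B -> covec M h j = (j == k)%:R.
  by case/gB=> i <-; rewrite hg mxE.
have hS s : s \in S -> covec M h s = 0.
  move=> sS; rewrite hB; last by apply: (subsetP kkSB); rewrite !inE sS !orbT.
  by case: eqP => // eq_sk; rewrite -eq_sk sS in kS.
have hk_gt0 : 0 < covec M h k.
  by rewrite hB ?eqxx ?ltr01 //; apply: (subsetP kkSB); rewrite !inE eqxx orbT.
(* Tilt w along h, which vanishes on S and at k' but not at k, until a new
   point jm becomes tight. *)
have [t [jm [hjm_gt0 wjm t_le]]] := ratio_test expw.1 hk_gt0.
have w'E j : covec M (w - t *: h) j = covec M w j - t * covec M h j.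
  by rewrite covecB covecZ.
exists (w - t *: h), [set j | covec M (w - t *: h) j == 0]; split.
- split=> j; first by rewrite w'E subr_ge0 t_le.
  by rewrite inE; split=> /eqP.
- apply/properP; split.
    apply/subsetP => s sS; rewrite inE w'E hS // mulr0 subr0.
    exact/eqP/(exposes_eq0 expw).
  exists jm; first by rewrite inE w'E wjm subrr.
  by apply/negP => /hS hjm0; rewrite hjm0 ltxx in hjm_gt0.
exists k'; move: k'kS; rewrite !inE negb_or => /andP[k'k k'S].
rewrite w'E hB; last by apply: (subsetP kkSB); rewrite !inE eqxx.
by rewrite (negbTE k'k) mulr0 subr0 gt_eqF // (exposes_gt0 expw).
Qed.

Lemma proper_face_sub_facet M w S j :
  uniform_mx M -> (d.+1 <= n)%N -> exposes M w S -> j \notin S ->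
  exists A w', [/\ S \subset A, #|A| = d & exposes M w' A].
Proof.
move=> unifM len; have [m] := ubnP (d - #|S|).
elim: m w S j => // m IHm w S j ltSm expw jS.
have leSd := proper_face_card unifM expw jS.
have [ltSd | geSd] := ltnP #|S| d; last by exists S, w; split=> //; lia.
have [w' [S' [expw' ltSS' [j' j'S']]]] := exposes_proper_superset unifM len expw ltSd.
have [A [w'' [S'A cardA expw'']]] := IHm w' S' j' ltac:(have := proper_card ltSS'; lia) expw' j'S'.
by exists A, w''; split=> //; apply: subset_trans S'A; apply: proper_sub.
Qed.

Definition cons_col (j : 'I_n) (a : 'I_d -> 'I_n) : 'I_(1 + d) -> 'I_n :=
  fun i => if unlift ord0 i is Some k then a k else j.

Definition cons_minor M a j := \det (colsub (cons_col j a) M).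

Definition cofactor_covec M (a : 'I_d -> 'I_n) : 'rV[R]_(1 + d) :=
  \row_i ((-1) ^+ i * \det (row' i (colsub a M))).

Lemma cons_col_inj j a : injective a -> (forall k, a k != j) -> injective (cons_col j a).
Proof.
move=> ainj a_neq i1 i2; rewrite /cons_col.
case: unliftP => [k1|] ->; case: unliftP => [k2|] -> //.
- by move/ainj => ->.
- by move=> eq_k1; have := a_neq k1; rewrite eq_k1 eqxx.
- by move=> eq_k2; have := a_neq k2; rewrite eq_k2 eqxx.
Qed.

Lemma cons_minor_mem M a k : cons_minor M a (a k) = 0.
Proof.
rewrite /cons_minor -det_tr.
apply: (@determinant_alternate _ _ _ ord0 (lift ord0 k)); first exact: neq_lift.
by move=> c; rewrite !mxE /cons_col unlift_none liftK.
Qed.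

Lemma covec_cofactor_covec M a j : covec M (cofactor_covec M a) j = cons_minor M a j.
Proof.
rewrite /cons_minor (expand_det_col _ ord0) /covec mxE.
apply: eq_bigr => i _; rewrite !mxE mulrC /cons_col unlift_none /cofactor addn0.
by congr (_ * (_ * \det (row' _ _))); apply/matrixP => r k; rewrite !mxE liftK.
Qed.

(* The covectors vanishing on the d columns a are the multiples of
   cofactor_covec M a. *)
Lemma covec_cons_minor M w a j0 j :
  cons_minor M a j0 != 0 -> (forall k, covec M w (a k) = 0) ->
  cons_minor M a j0 * covec M w j = covec M w j0 * cons_minor M a j.
Proof.
move=> minor_neq0 wa0.
suff wE : cons_minor M a j0 *: w = covec M w j0 *: cofactor_covec M a.
  by rewrite -covecZ wE covecZ covec_cofactor_covec.
apply/eqP; rewrite -subr_eq0; apply/eqP/(covec_eq0 minor_neq0) => i.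
rewrite covecB !covecZ covec_cofactor_covec /cons_col.
case: unliftP => [k|] _; first by rewrite wa0 cons_minor_mem !mulr0 subrr.
by rewrite mulrC subrr.
Qed.

Lemma sg_cons_minor M w a j0 j :
  cons_minor M a j0 != 0 -> (forall k, covec M w (a k) = 0) ->
  0 < covec M w j0 -> 0 < covec M w j ->
  Num.sg (cons_minor M a j) = Num.sg (cons_minor M a j0).
Proof.
move=> minor_neq0 wa0 wj0_gt0 wj_gt0.
have := congr1 Num.sg (covec_cons_minor j minor_neq0 wa0).
by rewrite !sgrM (gtr0_sg wj0_gt0) (gtr0_sg wj_gt0) mulr1 mul1r.
Qed.

Lemma facet_transfer M N w A :
  uniform_mx M -> same_chirotope M N -> (d < n)%N -> #|A| = d ->
  exposes M w A -> mx_face N A.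
Proof.
move=> unifM chiMN ltdn cardA expw.
have [a [ainj aA]] := enum_set_ord cardA.
have [j0 j0A] := @exists_notin n A ltac:(lia).
have a_neq j : j \notin A -> forall k, a k != j.
  by move=> jA k; apply: contraNneq jA => <-; apply/aA; exists k.
have minor_neq0 P j : uniform_mx P -> j \notin A -> cons_minor P a j != 0.
  by move=> unifP jA; apply/unifP/cons_col_inj/a_neq.
have wa0 k : covec M w (a k) = 0 by apply/(exposes_eq0 expw)/aA; exists k.
exists (cons_minor N a j0 *: cofactor_covec N a); apply: exposesP => j.
  by case/aA=> k <-; rewrite covecZ covec_cofactor_covec cons_minor_mem mulr0.
move=> jA; rewrite covecZ covec_cofactor_covec -sgr_gt0 sgrM.
rewrite -!chiMN; try by apply/cons_col_inj/a_neq.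
rewrite -/(cons_minor M a j) (sg_cons_minor (j := j) (minor_neq0 M j0 unifM j0A) wa0).
  by rewrite -expr2 sqr_sg minor_neq0 ?ltr01.
all: exact: exposes_gt0 expw _.
Qed.

Lemma face_subset M u A S :
  uniform_mx M -> (#|A| <= d.+1 <= n)%N -> exposes M u A -> S \subset A ->
  mx_face M S.
Proof.
move=> unifM cardA expu SA.
have [B [AB cardB]] := exists_superset_card cardA.
have [g [ginj gB]] := enum_set_ord cardB.
have [h hg] := covec_interpolate (\row_i (g i \notin S)%:R) (unifM g ginj).
have hA j : j \in A -> covec M h j = (j \notin S)%:R.
  by move/(subsetP AB)/gB=> [i <-]; rewrite hg mxE.
have [K K_dom] := dominate (covec M u) (covec M h).
exists (K *: u + h); apply: exposesP => j; rewrite covecD covecZ.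
  move=> jS; have jA := subsetP SA j jS.
  by rewrite (exposes_eq0 expu jA) hA // jS mulr0 addr0.
move=> jS; case jA: (j \in A); last by rewrite K_dom // (exposes_gt0 expu) ?jA.
by rewrite (exposes_eq0 expu jA) hA // jS mulr0 add0r ltr01.
Qed.

Lemma mx_face_transfer M N S :
  uniform_mx M -> same_chirotope M N -> (d.+1 <= n)%N ->
  mx_face M S -> mx_face N S.
Proof.
move=> unifM chiMN len [w expw].
have [j jS | S_full] := pickP [pred j | j \notin S].
  have [A [w' [SA cardA expw']]] := proper_face_sub_facet unifM len expw jS.
  have [u expu] := facet_transfer unifM chiMN len cardA expw'.
  apply: face_subset (same_chirotope_uniform unifM chiMN) _ expu SA.
  by rewrite cardA leqnSn.
exists 0; apply: exposesP => j; rewrite covec0 // => jS.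
by have := S_full j; rewrite /= jS.
Qed.

End Faces.

Lemma covec_lift_mx (R : realFieldType) (d n : nat) (x : 'I_n -> 'rV[R]_d)
    (b : R) (c : 'rV[R]_d) j :
  covec (lift_mx x) (row_mx (const_mx b : 'M_(1, 1)) (- c)) j = b - dotv c (x j).
Proof.
rewrite /covec mxE big_split_ord big_ord1 row_mxEl col_mxEu !mxE mulr1.
rewrite /dotv -sumrN; congr (_ + _); apply: eq_bigr => k _.
by rewrite row_mxEr col_mxEd !mxE mulNr.
Qed.

Lemma face_index_set_mx_face (R : realFieldType) (d n : nat)
    (x : 'I_n -> 'rV[R]_d) S :
  face_index_set x S <-> mx_face (lift_mx x) S.
Proof.
split=> [[c [b [c_le cS]]] | [w [w_ge0 wS]]].
  exists (row_mx (const_mx b) (- c)); split=> j; rewrite covec_lift_mx.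
    by rewrite subr_ge0.
  by rewrite cS; split=> [<- | /eqP]; rewrite ?subrr // subr_eq0 => /eqP ->.
have [b [c wE]] : exists b c, w = row_mx (const_mx b : 'M_(1, 1)) (- c).
  exists (w 0 0), (- rsubmx w); rewrite opprK -[LHS]hsubmxK; f_equal.
  by apply/matrixP => i k; rewrite [i]ord1 [k]ord1 !mxE; congr (w 0 _); apply: val_inj.
exists c, b; split=> j.
  by have := w_ge0 j; rewrite wE covec_lift_mx subr_ge0.
by rewrite wS wE covec_lift_mx; split=> [/eqP | <-]; rewrite ?subrr // subr_eq0 => /eqP ->.
Qed.

Lemma mx_face_colsub_perm (R : realFieldType) (d n : nat)
    (M : 'M[R]_(1 + d, n)) (pi : 'S_n) S :
  mx_face (colsub pi M) S <-> mx_face M (pi @: S).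
Proof.
have covecE w j : covec (colsub pi M) w j = covec M w (pi j) by apply: covec_colsub.
have memE j : (pi j \in pi @: S) = (j \in S) by rewrite mem_imset //; apply: perm_inj.
split=> [[w [w_ge0 wS]] | [w [w_ge0 wS]]]; exists w; split=> j.
- by rewrite -(permKV pi j) -covecE.
- by rewrite -(permKV pi j) memE -covecE.
- by rewrite covecE.
by rewrite covecE -memE.
Qed.

Unset Implicit Arguments.

Theorem corollary3p5 (R : realFieldType) (d n : nat) (x : 'I_n -> 'rV[R]_d)
  (pi : 'S_n) :
  (d.+1 <= n)%N ->
  all_max_minors_pos (lift_mx x) ->
  all_max_minors_pos (colsub pi (lift_mx x)) ->
  comb_automorphism x pi.
Proof.
move=> len posx pos_pix S.
have unif_x := max_minors_pos_uniform posx.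
have unif_pix := max_minors_pos_uniform pos_pix.
rewrite !face_index_set_mx_face -mx_face_colsub_perm.
split; apply: mx_face_transfer => //; exact: max_minors_pos_same_chirotope.
Qed.
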